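(* Let $q$ be a prime power, $m$ a positive integer, and $n=q^m-1$. Then every $q$-ary cyclotomic coset $C_x=\{xq^\ell\bmod n\mid \ell\in\mathbf{Z}\}$ with $1\le x<q^{\lceil m/2\rceil}+1$ has cardinality $|C_x|=m$. *)

From mathcomp Require Import all_boot.
Set Implicit Arguments. Unset Strict Implicit. Unset Printing Implicit Defensive.

Definition is_prime_power (q : nat) : Prop :=
  exists p k : nat, [/\ prime p, 0 < k & q = p ^ k].

(* Membership in the q-ary cyclotomic coset C_x = { x q^l mod n | l in Z }.  For l = -j < 0, x q^{-j} mod n
   is the unique residue y < n with y * q^j = x (mod n) (q is a unit mod n
   in the intended setting n = q^m - 1). *)
Definition in_cyc_coset (q n x y : nat) : Prop :=
  (exists l : nat, y = (x * q ^ l) %% n) \/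
  (exists j : nat, y < n /\ y * q ^ j = x %[mod n]).

Definition has_card (P : nat -> Prop) (k : nat) : Prop :=
  exists s : seq nat, [/\ uniq s, size s = k & forall y, P y <-> y \in s].

(* Since q^m = 1 mod n, the residues x q^l mod n with 0 <= l < m exhaust the coset.
   If two of them coincided, then x q^d = x mod n for some 0 < d < m, hence also for
   m - d, and one of d, m - d is at most m/2.  But then n divides x (q^d - 1), which is
   positive and, because x <= q^(ceil(m/2)), at most q^m - q^(ceil(m/2)) < n. *)
From mathcomp Require Import all_boot zify.

Set Implicit Arguments.
Unset Strict Implicit.
Unset Printing Implicit Defensive.

Lemma expn_modn_pred q m : 0 < q -> q ^ m = 1 %[mod q ^ m - 1].
Proof.
move=> q_gt0; have qm_gt0 : 0 < q ^ m by rewrite expn_gt0 q_gt0.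
by rewrite -{1}(subnK qm_gt0) -modnDml modnn.
Qed.

Lemma leq_subn_half m d : m./2 < d -> m - d <= m./2.
Proof. by have := odd_double_half m; lia. Qed.

Section CyclotomicCoset.

Variables q m : nat.
Hypothesis q_gt1 : 1 < q.
Hypothesis m_gt0 : 0 < m.
Let n := q ^ m - 1.

Let expn_m_modn : q ^ m = 1 %[mod n].
Proof. exact/expn_modn_pred/ltnW. Qed.

Lemma mul_expn_modn_period x l : x * q ^ l = x * q ^ (l %% m) %[mod n].
Proof.
have periodic : (q ^ m) ^ (l %/ m) = 1 %[mod n].
  by rewrite -modnXm expn_m_modn modnXm exp1n.
rewrite {1}(divn_eq l m) expnD (mulnC _ m) expnM mulnCA.
by rewrite -modnMml periodic modnMml mul1n.
Qed.

Lemma mul_expn_modn_self x : x * q ^ m = x %[mod n].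
Proof. by rewrite -modnMmr expn_m_modn modnMmr muln1. Qed.

Lemma mul_expn_modn_compl x e : e <= m ->
  x * q ^ e = x %[mod n] -> x * q ^ (m - e) = x %[mod n].
Proof.
move=> le_em fix_e.
rewrite -(mul_expn_modn_self x) -[in RHS](subnKC le_em) expnD mulnA.
by rewrite -[in RHS]modnMml fix_e modnMml.
Qed.

Lemma mul_expn_modn_neq x j : 0 < x -> x <= q ^ uphalf m ->
  0 < j -> j <= m./2 -> x * q ^ j != x %[mod n].
Proof.
move=> x_gt0 x_le j_gt0 j_le.
have qj_gt1 : 1 < q ^ j by rewrite -(exp1n j) ltn_exp2r.
have qu_gt1 : 1 < q ^ uphalf m.
  by rewrite -(exp1n (uphalf m)) ltn_exp2r // uphalf_gt0.
have le_um : q ^ uphalf m * q ^ j <= q ^ m.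
  rewrite -expnD leq_exp2l // uphalf_half.
  by move: j_le; have := odd_double_half m; lia.
have step_pos : 0 < x * q ^ j - x by nia.
have step_lt : x * q ^ j - x < n.
  have : x * (q ^ j - 1) <= q ^ uphalf m * (q ^ j - 1).
    by rewrite leq_mul2r x_le orbT.
  rewrite /n; nia.
rewrite eqn_mod_dvd; last by rewrite leq_pmulr // expn_gt0 ltnW.
by apply/negP => /(dvdn_leq step_pos); rewrite leqNgt step_lt.
Qed.

Lemma mul_expn_modn_inj x a b : 0 < x -> x <= q ^ uphalf m -> a < m -> b < m ->
  x * q ^ a = x * q ^ b %[mod n] -> a = b.
Proof.
move=> x_gt0 x_le.
wlog lt_ab : a b / a < b => [hw am bm eq_ab | am bm eq_ab].
  case: (ltngtP a b) => [lt_ab | lt_ba | //]; first exact: hw.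
  by apply/esym/hw.
have fix_compl : x * q ^ (m - (b - a)) = x %[mod n].
  rewrite (subnBA _ (ltnW lt_ab)) addnC -(addnBA _ (ltnW bm)) expnD mulnA.
  rewrite -modnMml eq_ab modnMml -mulnA -expnD (subnKC (ltnW bm)).
  exact: mul_expn_modn_self.
have fix_diff : x * q ^ (b - a) = x %[mod n].
  have le_dm : b - a <= m := leq_trans (leq_subr a b) (ltnW bm).
  rewrite -(subKn le_dm); exact: mul_expn_modn_compl (leq_subr _ _) fix_compl.
have d_pos : 0 < b - a by rewrite subn_gt0.
have [le_d | lt_d] := leqP (b - a) m./2.
  by move: (mul_expn_modn_neq x_gt0 x_le d_pos le_d); rewrite fix_diff eqxx.
have compl_pos : 0 < m - (b - a).
  by rewrite subn_gt0 (leq_ltn_trans (leq_subr a b)).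
have compl_le := leq_subn_half lt_d.
by move: (mul_expn_modn_neq x_gt0 x_le compl_pos compl_le); rewrite fix_compl eqxx.
Qed.

Lemma modn_div_expn x y j : y < n -> y * q ^ j = x %[mod n] ->
  y = x * q ^ ((m - 1) * j) %% n.
Proof.
move=> lt_yn eq_y.
have y_fix : y = y * q ^ (m * j) %[mod n].
  by rewrite mul_expn_modn_period modnMr muln1.
have split_mj : m * j = j + (m - 1) * j.
  by rewrite -{1}(subnK m_gt0) mulnDl mul1n addnC.
rewrite -[LHS](modn_small lt_yn) y_fix split_mj expnD mulnA.
by rewrite -modnMml eq_y modnMml.
Qed.

Lemma in_cyc_cosetE x y :
  in_cyc_coset q n x y <-> y \in [seq x * q ^ l %% n | l <- iota 0 m].
Proof.
have in_seq l : x * q ^ l %% n \in [seq x * q ^ l %% n | l <- iota 0 m].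
  apply/mapP; exists (l %% m); first by rewrite mem_iota ltn_pmod.
  exact: mul_expn_modn_period.
split=> [[[l ->] | [j [lt_yn /modn_div_expn ->]]] // | /mapP[l _ ->]].
by left; exists l.
Qed.

End CyclotomicCoset.

Theorem mainTheorem4 (q m : nat) :
  is_prime_power q -> 0 < m ->
  forall x : nat, 1 <= x -> x < q ^ (uphalf m) + 1 ->
  has_card (in_cyc_coset q (q ^ m - 1) x) m.
Proof.
move=> [p [k [p_prime k_gt0 q_eq]]] m_gt0 x x_gt0; rewrite addn1 ltnS => x_le.
have q_gt1 : 1 < q by rewrite q_eq -(exp1n k) ltn_exp2r // prime_gt1.
exists [seq x * q ^ l %% (q ^ m - 1) | l <- iota 0 m]; split.
- rewrite map_inj_in_uniq ?iota_uniq // => a b.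
  rewrite !mem_iota !add0n => /andP[_ a_lt] /andP[_ b_lt].
  exact: mul_expn_modn_inj.
- by rewrite size_map size_iota.
- exact: in_cyc_cosetE.
Qed.
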